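(* Let $\mathcal P$ and $\mathcal Q$ be two pairs of lines in the plane. If $\mathcal P$ consists of orthogonal lines, then rotating $\mathcal P$ by any angle about the crossing point of its lines does not change the rectangle locus of $\mathcal P$ and $\mathcal Q$.
   Context: A pair of lines means two distinct lines. The rectangle locus of two pairs $L_1,L_3$ and $L_2,L_4$ is the set of points $p$ in the plane that are the midpoint both of a segment joining $L_1$ and $L_3$ and of a segment joining $L_2$ and $L_4$, these two segments having equal length (equivalently, centers of possibly degenerate rectangles whose diagonals join the lines of the respective pairs). *)

From Stdlib Require Import Reals.
Open Scope R_scope.

Definition point := (R * R)%type.

Definition is_line (L : point -> Prop) : Prop :=
  exists a b c : R, (a <> 0 \/ b <> 0) /\
    forall p : point, L p <-> a * fst p + b * snd p = c.

Definition same_line (L M : point -> Prop) : Prop := forall p, L p <-> M p.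

Definition is_pair (L M : point -> Prop) : Prop :=
  is_line L /\ is_line M /\ ~ same_line L M.

Definition orthogonal (L M : point -> Prop) : Prop :=
  exists a b c a' b' c' : R, (a <> 0 \/ b <> 0) /\ (a' <> 0 \/ b' <> 0) /\
    (forall p : point, L p <-> a * fst p + b * snd p = c) /\
    (forall p : point, M p <-> a' * fst p + b' * snd p = c') /\
    a * a' + b * b' = 0.

Definition midpoint (x y : point) : point :=
  ((fst x + fst y) / 2, (snd x + snd y) / 2).

Definition dist (x y : point) : R :=
  sqrt ((fst x - fst y) ^ 2 + (snd x - snd y) ^ 2).

Definition rectangle_locus (L1 L3 L2 L4 : point -> Prop) (p : point) : Prop :=
  exists x1 x3 x2 x4 : point,
    L1 x1 /\ L3 x3 /\ L2 x2 /\ L4 x4 /\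
    midpoint x1 x3 = p /\ midpoint x2 x4 = p /\
    dist x1 x3 = dist x2 x4.

Definition rotate (c : point) (t : R) (p : point) : point :=
  (fst c + cos t * (fst p - fst c) - sin t * (snd p - snd c),
   snd c + sin t * (fst p - fst c) + cos t * (snd p - snd c)).

Definition rotate_set (c : point) (t : R) (L : point -> Prop) : point -> Prop :=
  fun p => exists q, L q /\ p = rotate c t q.

(* If L1 and L3 are orthogonal lines through c, then for x1 on L1 and x3 on L3
   the triangle x1 c x3 has a right angle at c, so by Thales' theorem the
   segment [x1, x3] has length twice the distance from its midpoint p to c;
   and every point p is such a midpoint.  Hence p lies in the rectangle locus
   exactly when some segment joining L2 and L4 has midpoint p and length
   2 |p - c|, a condition that no longer mentions L1 and L3.  A rotation about
   c maps L1, L3 to orthogonal lines through c, so it leaves the locus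
   unchanged. *)

From Pilot Require Import Defs.
From Stdlib Require Import Reals Lra.
Open Scope R_scope.

Lemma nonzero_vec_iff (a b : R) : a <> 0 \/ b <> 0 <-> 0 < a * a + b * b.
Proof.
  split.
  - intros [H | H].
    + pose proof (Rsqr_pos_lt a H); unfold Rsqr in *; nra.
    + pose proof (Rsqr_pos_lt b H); unfold Rsqr in *; nra.
  - intros H. destruct (Req_dec a 0) as [-> | Ha]; [right; intros ->; lra | now left].
Qed.

Lemma orthogonal_vec_det_neq0 (a b a' b' : R) :
  a <> 0 \/ b <> 0 -> a' <> 0 \/ b' <> 0 -> a * a' + b * b' = 0 ->
  a * b' - a' * b <> 0.
Proof.
  intros Hn Hn' Ho Hdet.
  apply nonzero_vec_iff in Hn, Hn'.
  assert (Lagrange : (a * b' - a' * b) ^ 2 + (a * a' + b * b') ^ 2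
                     = (a * a + b * b) * (a' * a' + b' * b')) by ring.
  rewrite Hdet, Ho in Lagrange.
  pose proof (Rmult_lt_0_compat _ _ Hn Hn'). lra.
Qed.

Lemma perp_of_perp_normals (a b a' b' u1 u2 w1 w2 : R) :
  a <> 0 \/ b <> 0 -> a' <> 0 \/ b' <> 0 -> a * a' + b * b' = 0 ->
  a * u1 + b * u2 = 0 -> a' * w1 + b' * w2 = 0 -> u1 * w1 + u2 * w2 = 0.
Proof.
  intros Hn Hn' Ho Hu Hw.
  apply nonzero_vec_iff in Hn, Hn'.
  (* expand u and w in the orthogonal frames (n, n^⊥) and (n', n'^⊥) *)
  assert (Frames : (a * a + b * b) * (a' * a' + b' * b') * (u1 * w1 + u2 * w2)
    = (a * u2 - b * u1) * (a' * w2 - b' * w1) * (a * a' + b * b')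
    + (a * u2 - b * u1) * (a' * w1 + b' * w2) * (a * b' - b * a')
    + (a * u1 + b * u2) * (a' * w2 - b' * w1) * (b * a' - a * b')
    + (a * u1 + b * u2) * (a' * w1 + b' * w2) * (a * a' + b * b')) by ring.
  rewrite Ho, Hu, Hw in Frames.
  apply (Rmult_eq_reg_l ((a * a + b * b) * (a' * a' + b' * b'))).
  - lra.
  - pose proof (Rmult_lt_0_compat _ _ Hn Hn'). lra.
Qed.

Section OrthogonalPair.

Variables (L1 L3 : point -> Prop) (c : point).
Hypotheses (HL : orthogonal L1 L3) (Hc1 : L1 c) (Hc3 : L3 c).

Lemma orthogonal_chord_dist (x1 x3 : point) :
  L1 x1 -> L3 x3 -> Defs.dist x1 x3 = 2 * Defs.dist (midpoint x1 x3) c.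
Proof.
  intros H1 H3.
  destruct HL as (a & b & k & a' & b' & k' & Hn & Hn' & E1 & E3 & Ho).
  apply E1 in Hc1, H1. apply E3 in Hc3, H3.
  assert (Hperp : (fst x1 - fst c) * (fst x3 - fst c)
                  + (snd x1 - snd c) * (snd x3 - snd c) = 0).
  { apply (perp_of_perp_normals a b a' b'); auto; lra. }
  unfold Defs.dist, midpoint; cbn [fst snd].
  replace ((fst x1 - fst x3) ^ 2 + (snd x1 - snd x3) ^ 2)
    with (4 * (((fst x1 + fst x3) / 2 - fst c) ^ 2
               + ((snd x1 + snd x3) / 2 - snd c) ^ 2)) by nra.
  rewrite sqrt_mult_alt by lra.
  replace 4 with (2 * 2) by ring. now rewrite sqrt_square by lra.
Qed.

Lemma orthogonal_chord_exists (p : point) :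
  exists x1 x3 : point, L1 x1 /\ L3 x3 /\ midpoint x1 x3 = p.
Proof.
  destruct HL as (a & b & k & a' & b' & k' & Hn & Hn' & E1 & E3 & Ho).
  apply E1 in Hc1. apply E3 in Hc3.
  pose proof (orthogonal_vec_det_neq0 a b a' b' Hn Hn' Ho) as Hdet.
  set (s := 2 * (a' * (fst p - fst c) + b' * (snd p - snd c)) / (a * b' - a' * b)).
  set (x1 := (fst c - s * b, snd c + s * a)).
  exists x1, (2 * fst p - fst x1, 2 * snd p - snd x1).
  split; [| split].
  - apply E1. unfold x1; simpl. lra.
  - apply E3. unfold x1, s; simpl. rewrite <- Hc3. field. exact Hdet.
  - destruct p. unfold midpoint; simpl. f_equal; field.
Qed.

Lemma rectangle_locus_orthogonal (L2 L4 : point -> Prop) (p : point) :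
  rectangle_locus L1 L3 L2 L4 p <->
  exists x2 x4 : point,
    L2 x2 /\ L4 x4 /\ midpoint x2 x4 = p /\ Defs.dist x2 x4 = 2 * Defs.dist p c.
Proof.
  split.
  - intros (x1 & x3 & x2 & x4 & H1 & H3 & H2 & H4 & M13 & M24 & D).
    exists x2, x4. repeat split; auto.
    now rewrite <- D, orthogonal_chord_dist, M13.
  - intros (x2 & x4 & H2 & H4 & M24 & D).
    destruct (orthogonal_chord_exists p) as (x1 & x3 & H1 & H3 & M13).
    exists x1, x3, x2, x4. repeat split; auto.
    now rewrite D, orthogonal_chord_dist, M13.
Qed.

End OrthogonalPair.

Lemma rotate_0 (c p : point) : rotate c 0 p = p.
Proof.
  destruct c, p. unfold rotate; simpl. rewrite cos_0, sin_0. f_equal; ring.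
Qed.

Lemma rotate_rotate (c : point) (s t : R) (p : point) :
  rotate c s (rotate c t p) = rotate c (s + t) p.
Proof.
  destruct c, p. unfold rotate; simpl. rewrite cos_plus, sin_plus. f_equal; ring.
Qed.

Lemma rotate_center (c : point) (t : R) : rotate c t c = c.
Proof.
  destruct c. unfold rotate; simpl. f_equal; ring.
Qed.

Lemma rotate_setE (c : point) (t : R) (L : point -> Prop) (p : point) :
  rotate_set c t L p <-> L (rotate c (- t) p).
Proof.
  split.
  - intros (q & Hq & ->). now rewrite rotate_rotate, Rplus_opp_l, rotate_0.
  - intros H. exists (rotate c (- t) p). split; auto.
    now rewrite rotate_rotate, Rplus_opp_r, rotate_0.
Qed.

Lemma rotate_set_center (c : point) (t : R) (L : point -> Prop) :
  L c -> rotate_set c t L c.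
Proof. intros H. now rewrite rotate_setE, rotate_center. Qed.

(* The normal vector (a, b) of a line rotates along with the line. *)
Lemma rotate_set_line (c : point) (t a b k : R) (L : point -> Prop) :
  (forall q : point, L q <-> a * fst q + b * snd q = k) ->
  forall p : point, rotate_set c t L p <->
    (a * cos t - b * sin t) * fst p + (a * sin t + b * cos t) * snd p
    = k - (a * fst c + b * snd c)
      + ((a * cos t - b * sin t) * fst c + (a * sin t + b * cos t) * snd c).
Proof.
  intros E p.
  rewrite rotate_setE, E. unfold rotate; simpl. rewrite cos_neg, sin_neg.
  split; intros; lra.
Qed.

Lemma rotate_dot (t a b a' b' : R) :
  (a * cos t - b * sin t) * (a' * cos t - b' * sin t)
  + (a * sin t + b * cos t) * (a' * sin t + b' * cos t) = a * a' + b * b'.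
Proof.
  pose proof (sin2_cos2 t) as CS. unfold Rsqr in CS.
  transitivity ((a * a' + b * b') * (sin t * sin t + cos t * cos t)); [ring |].
  rewrite CS. ring.
Qed.

Lemma orthogonal_rotate_set (c : point) (t : R) (L M : point -> Prop) :
  orthogonal L M -> orthogonal (rotate_set c t L) (rotate_set c t M).
Proof.
  intros (a & b & k & a' & b' & k' & Hn & Hn' & EL & EM & Ho).
  pose proof (rotate_set_line c t a b k L EL) as EL'.
  pose proof (rotate_set_line c t a' b' k' M EM) as EM'.
  do 6 eexists. split; [| split; [| split; [exact EL' | split; [exact EM' |]]]].
  - apply nonzero_vec_iff. rewrite rotate_dot. now apply nonzero_vec_iff.
  - apply nonzero_vec_iff. rewrite rotate_dot. now apply nonzero_vec_iff.
  - now rewrite rotate_dot.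
Qed.

Theorem proposition5p1 (L1 L3 L2 L4 : point -> Prop) (c : point) (t : R) :
  is_pair L1 L3 -> is_pair L2 L4 ->
  orthogonal L1 L3 ->
  L1 c -> L3 c ->
  forall p : point,
    rectangle_locus L1 L3 L2 L4 p <->
    rectangle_locus (rotate_set c t L1) (rotate_set c t L3) L2 L4 p.
Proof.
  intros _ _ HL Hc1 Hc3 p.
  rewrite (rectangle_locus_orthogonal L1 L3 c HL Hc1 Hc3).
  rewrite (rectangle_locus_orthogonal _ _ c (orthogonal_rotate_set c t L1 L3 HL)
             (rotate_set_center c t L1 Hc1) (rotate_set_center c t L3 Hc3)).
  reflexivity.
Qed.
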